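(* Let $n\geq 1$, $0\leq p\leq1$, and $1\leq k<n$. Then $$\Pr_p(PC^-_{[k]})=2^k\bigl(p^{2^n-2^{n-k}}-p^{2^n}\bigr),\qquad \Pr_p(NC^-_{[k]})=2^k\bigl((1-p)^{2^n-2^{n-k}}-(1-p)^{2^n}\bigr),$$ where $[k]=\{0,1,\dots,k-1\}$.
   Context: Boolean functions on $n$ variables are maps $f:\{0,1\}^n\to\{0,1\}$, variables indexed by $[n]=\{0,\dots,n-1\}$. The bias-$p$ probability measure on Boolean functions on $n$ variables is $\Pr_p(f)=p^{|f^{-1}\{1\}|}(1-p)^{|f^{-1}\{0\}|}$ (with $0^0=1$). For a nonempty $I\subseteq[n]$, $f$ is positively canalizing on $I$ if there is a function $\sigma:I\to\{0,1\}$ such that for all $x\in\{0,1\}^n$, if there exists $i\in I$ with $x_i\neq\sigma(i)$ then $f(x)=1$; negatively canalizing on $I$ is defined the same way with $f(x)=0$ in place of $f(x)=1$. $PC^-_I$ (resp. $NC^-_I$) is the set of nonconstant Boolean functions on $n$ variables that are positively (resp. negatively) canalizing on $I$. *)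

From HB Require Import structures.
From mathcomp Require Import all_boot all_order all_algebra.
Set Implicit Arguments. Unset Strict Implicit. Unset Printing Implicit Defensive.
Import Order.TTheory GRing.Theory Num.Theory.

Definition point (n : nat) := {ffun 'I_n -> bool}.
Definition boolfun (n : nat) := {ffun point n -> bool}.

Definition prob_fun (R : pzRingType) (p : R) (n : nat) (f : boolfun n) : R :=
  (p ^+ #|[set x | f x]| * (1 - p) ^+ #|[set x | ~~ f x]|)%R.

Definition Prp (R : pzRingType) (p : R) (n : nat) (S : {set boolfun n}) : R :=
  (\sum_(f in S) prob_fun p f)%R.

Definition nonconstant (n : nat) (f : boolfun n) : bool :=
  [exists x, exists y, f x != f y].

(* f is b-canalizing on I (b = true: positively, b = false: negatively):
   there is sigma (only its values on I matter) such that whenever some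
   i in I has x_i <> sigma(i), f x = b. *)
Definition canalizing_val (n : nat) (b : bool) (I : {set 'I_n}) (f : boolfun n) : bool :=
  [exists sigma : {ffun 'I_n -> bool},
    [forall x : point n, [exists i in I, x i != sigma i] ==> (f x == b)]].

Definition PCm (n : nat) (I : {set 'I_n}) : {set boolfun n} :=
  [set f | nonconstant f && canalizing_val true I f].
Definition NCm (n : nat) (I : {set 'I_n}) : {set boolfun n} :=
  [set f | nonconstant f && canalizing_val false I f].

Definition first_k (n k : nat) : {set 'I_n} := [set i : 'I_n | (i < k)%N].

(* Write w for p when b = true and for 1 - p when b = false. A function is
   b-canalizing on I exactly when it equals b off some cylinder
   C_t = {x | x = t on I}, where t ranges over the 2^|I| restrictions to I.
   If f is moreover nonconstant, then f x <> b for some x, which must lie in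
   C_t; so t is determined by f, and the b-canalizing nonconstant functions
   are the disjoint union over t of {f = b off C_t} minus the constant b.
   The values on C_t being free, that set has probability
   w^(2^n - 2^(n-|I|)), while the constant has probability w^(2^n). *)

From mathcomp Require Import all_boot all_order all_algebra.
Import Order.TTheory GRing.Theory Num.Theory.
Local Open Scope ring_scope.
Set Implicit Arguments.
Unset Strict Implicit.

Lemma card_family_prod (aT rT : finType) (Q : aT -> pred rT) :
  #|family Q| = (\prod_x #|Q x|)%N.
Proof.
rewrite -sum1_card (eq_bigr (fun _ => \prod_(x : aT) 1)%N) => [|f _]; last by rewrite big1.
rewrite -(bigA_distr_big_dep _ (fun _ _ => 1%N)).
by apply: eq_bigr => x _; rewrite sum1_card.
Qed.

Lemma card_family_free_on (aT : finType) (J : {set aT}) (Q : aT -> pred bool) :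
  (forall x, #|Q x| = 1%N) ->
  #|family (fun x => if x \in J then xpredT else Q x)| = (2 ^ #|J|)%N.
Proof.
move=> Q1; rewrite card_family_prod -prod_nat_const [RHS]big_mkcond.
by apply: eq_bigr => x _; case: (x \in J); rewrite ?Q1 // -card_bool; apply: eq_card.
Qed.

Section Cylinders.
Variables (n : nat) (I : {set 'I_n}).

Definition cylinder (t : point n) : {set point n} :=
  [set x : point n | [forall i in I, x i == t i]].

(* Each restriction of a point to [I] is represented by its extension by [false]. *)
Definition cylinder_reps : {set point n} :=
  [set t : point n | [forall i in ~: I, ~~ t i]].

Lemma card_cylinder (t : point n) : #|cylinder t| = (2 ^ (n - #|I|))%N.
Proof.
have <- : #|~: I| = (n - #|I|)%N by rewrite cardsCs setCK card_ord.
rewrite -(card_family_free_on (~: I) (Q := fun i => pred1 (t i))) => [|i]; last exact: card1.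
apply: eq_card => x; rewrite inE; apply/forall_inP/familyP => [xt i | xt i iI].
  by rewrite in_setC; case: ifPn => // /negPn /xt.
by move: (xt i); rewrite in_setC iI.
Qed.

Lemma card_cylinder_reps : #|cylinder_reps| = (2 ^ #|I|)%N.
Proof.
rewrite -(card_family_free_on I (Q := fun=> pred1 false)) => [|i]; last exact: card1.
apply: eq_card => t; rewrite inE; apply/forall_inP/familyP => [tI i | tI i].
  by case: ifPn => // iNI; rewrite inE; apply/eqP/negbTE/tI; rewrite in_setC.
by rewrite in_setC; move: (tI i); case: (i \in I) => //= /eqP ->.
Qed.

Lemma cylinder_reps_meet_eq (t t' x : point n) :
  t \in cylinder_reps -> t' \in cylinder_reps ->
  x \in cylinder t -> x \in cylinder t' -> t = t'.
Proof.
rewrite !inE => /forall_inP tI /forall_inP t'I /forall_inP xt /forall_inP xt'.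
apply/ffunP => i; have [iI | iNI] := boolP (i \in I).
  by rewrite -(eqP (xt i iI)) (eqP (xt' i iI)).
by rewrite -in_setC in iNI; rewrite (negbTE (tI i iNI)) (negbTE (t'I i iNI)).
Qed.

Lemma flip_notin_cylinder (t : point n) :
  I != set0 -> [ffun i => ~~ t i] \notin cylinder t.
Proof.
case/set0Pn => i iI; rewrite inE negb_forall; apply/existsP; exists i.
by rewrite iI ffunE; case: (t i).
Qed.

End Cylinders.

Section Canalizing.
Variables (n : nat) (I : {set 'I_n}) (b : bool).

Definition canalizing_set : {set boolfun n} :=
  [set f | nonconstant f && canalizing_val b I f].

Definition constant_off (t : point n) : {set boolfun n} :=
  [set f : boolfun n | [forall x in ~: cylinder I t, f x == b]].

Definition cylinder_canalizing (t : point n) : {set boolfun n} :=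
  [set f in constant_off t | nonconstant f].

Lemma nonconstant_neq (f : boolfun n) : nonconstant f -> exists x, f x != b.
Proof.
case/existsP => x /existsP[y fxy]; have [fxb | ] := eqVneq (f x) b; last by exists x.
by exists y; rewrite -fxb eq_sym.
Qed.

Lemma canalizing_val_cylinder (f : boolfun n) :
  canalizing_val b I f = [exists t in cylinder_reps I, f \in constant_off t].
Proof.
apply/existsP/exists_inP => [[sigma /forallP f_sigma] | [t _ ft]].
  exists [ffun i => (i \in I) && sigma i].
    by rewrite inE; apply/forall_inP => i; rewrite inE ffunE => /negbTE ->.
  rewrite inE; apply/forall_inP => x; rewrite !inE negb_forall_in => /exists_inP[i iI xi].
  by apply: (implyP (f_sigma x)); apply/exists_inP; exists i; rewrite // ffunE iI in xi.
exists t; apply/forallP => x; apply/implyP => /exists_inP[i iI xi].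
move: ft; rewrite inE => /forall_inP; apply.
by rewrite !inE negb_forall_in; apply/exists_inP; exists i.
Qed.

Lemma cylinder_canalizing_uniq (t t' : point n) (f : boolfun n) :
  t \in cylinder_reps I -> t' \in cylinder_reps I ->
  f \in cylinder_canalizing t -> f \in cylinder_canalizing t' -> t = t'.
Proof.
move=> tR t'R; rewrite !inE => /andP[/forall_inP ft fnc] /andP[/forall_inP ft' _].
have [x fxb] := nonconstant_neq fnc.
apply: (cylinder_reps_meet_eq tR t'R (x := x)).
  by apply: contraR fxb => xNt; apply: ft; rewrite inE.
by apply: contraR fxb => xNt'; apply: ft'; rewrite inE.
Qed.

Lemma sum_canalizing_set (V : nmodType) (F : boolfun n -> V) :
  \sum_(f in canalizing_set) F f =
  \sum_(t in cylinder_reps I) \sum_(f in cylinder_canalizing t) F f.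
Proof.
rewrite [RHS](exchange_big_dep xpredT) //= big_mkcond; apply: eq_bigr => f _.
rewrite inE canalizing_val_cylinder; case: ifPn => [/andP[fnc /exists_inP[t0 t0R ft0]] | fNS].
  have ft0' : f \in cylinder_canalizing t0 by rewrite inE ft0.
  rewrite (big_pred1 t0) // => t; apply/andP/eqP => [[tR ft] | ->]; last by [].
  exact: cylinder_canalizing_uniq ft ft0'.
rewrite big_pred0 // => t; apply: contraNF fNS => /andP[tR].
by rewrite inE => /andP[ft ->]; apply/exists_inP; exists t.
Qed.

Lemma cylinder_canalizingE (t : point n) :
  I != set0 -> cylinder_canalizing t = constant_off t :\ [ffun=> b].
Proof.
move=> I0; apply/setP => f; rewrite in_setD1 [f \in cylinder_canalizing t]inE andbC.
have [ft | _] := boolP (f \in constant_off t); rewrite ?andbF ?andbT //.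
apply/idP/idP => [/nonconstant_neq[x] | f_ncst].
  by apply: contra => /eqP ->; rewrite ffunE.
have [x fxb] : exists x, f x != b.
  apply/existsP; apply: contraR f_ncst => /existsPn fb.
  by apply/eqP/ffunP => y; rewrite ffunE; apply/eqP/negPn/fb.
have flipb : f [ffun i => ~~ t i] = b.
  by move: ft; rewrite inE => /forall_inP fb; apply/eqP/fb; rewrite inE flip_notin_cylinder.
apply/existsP; exists x; apply/existsP; exists [ffun i => ~~ t i]; by rewrite flipb.
Qed.

End Canalizing.

Section BiasedProbability.
Variables (R : comPzRingType) (p : R).

Definition bit_weight (b : bool) : R := if b then p else 1 - p.

Lemma prob_fun_prod (n : nat) (f : boolfun n) :
  prob_fun p f = \prod_x bit_weight (f x).
Proof.
rewrite /prob_fun (bigID (fun x => f x)) /= -!prodr_const.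
by congr (_ * _); apply: eq_big => x; rewrite ?inE //; [move=> -> | move=> /negbTE ->].
Qed.

Lemma card_point (n : nat) : #|point n| = (2 ^ n)%N.
Proof. by rewrite card_ffun card_bool card_ord. Qed.

Lemma prob_fun_cst (n : nat) (b : bool) :
  prob_fun p ([ffun=> b] : boolfun n) = bit_weight b ^+ (2 ^ n).
Proof.
rewrite prob_fun_prod (eq_bigr (fun _ => bit_weight b)) => [|x _]; last by rewrite ffunE.
by rewrite prodr_const card_point.
Qed.

Lemma sum_prob_fun_family (n : nat) (Q : point n -> pred bool) :
  \sum_(f in family Q) prob_fun p f = \prod_x \sum_(b | Q x b) bit_weight b.
Proof.
rewrite bigA_distr_big_dep; apply: eq_bigr => f _; exact: prob_fun_prod.
Qed.

Lemma Prp_constant_off (n : nat) (I : {set 'I_n}) (b : bool) (t : point n) :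
  Prp p (constant_off I b t) = bit_weight b ^+ (2 ^ n - 2 ^ (n - #|I|)).
Proof.
pose Q x := if x \in cylinder I t then xpredT else pred1 b.
rewrite /Prp (eq_bigl (fun f => f \in family Q)) => [|f]; last first.
  rewrite inE; apply/forall_inP/familyP => fc x; move: (fc x); rewrite /Q in_setC.
    by case: (x \in cylinder I t) => // /(_ isT).
  by case: (x \in cylinder I t) => // fx _.
rewrite sum_prob_fun_family.
rewrite (bigID (mem (cylinder I t))) /= big1 => [|x xt]; last first.
  by rewrite /Q xt big_mkcond big_bool /= subrKC.
rewrite mul1r (eq_bigr (fun _ => bit_weight b)) => [|x /negbTE xt]; last first.
  by rewrite /Q xt big_pred1_eq.
rewrite (eq_bigl [in ~: cylinder I t]) => [|x]; last by rewrite in_setC.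
by rewrite prodr_const -(addKn #|cylinder I t| #|~: _|) cardsC card_point card_cylinder.
Qed.

Lemma Prp_cylinder_canalizing (n : nat) (I : {set 'I_n}) (b : bool) (t : point n) :
  I != set0 ->
  Prp p (cylinder_canalizing I b t) =
    bit_weight b ^+ (2 ^ n - 2 ^ (n - #|I|)) - bit_weight b ^+ (2 ^ n).
Proof.
move=> I0; have cst_off : [ffun=> b] \in constant_off I b t.
  by rewrite inE; apply/forall_inP => x _; rewrite ffunE.
rewrite cylinder_canalizingE // -(Prp_constant_off I b t) -(prob_fun_cst n b).
by rewrite [in RHS]/Prp (big_setD1 _ cst_off) addrAC subrr add0r.
Qed.

Lemma Prp_canalizing_set (n : nat) (I : {set 'I_n}) (b : bool) :
  I != set0 ->
  Prp p (canalizing_set I b) =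
    2 ^+ #|I| * (bit_weight b ^+ (2 ^ n - 2 ^ (n - #|I|)) - bit_weight b ^+ (2 ^ n)).
Proof.
move=> I0; rewrite /Prp sum_canalizing_set.
under eq_bigr do rewrite -/(Prp p _) Prp_cylinder_canalizing //.
by rewrite sumr_const card_cylinder_reps -[LHS]mulr_natl natrX.
Qed.

End BiasedProbability.

Lemma card_first_k (n k : nat) : (k <= n)%N -> #|first_k n k| = k.
Proof.
move=> kn; have -> : first_k n k = [set widen_ord kn i | i : 'I_k].
  apply/setP => i; rewrite inE; apply/idP/imsetP => [ik | [j _ ->]]; last exact: (ltn_ord j).
  by exists (Ordinal ik) => //; apply: val_inj.
rewrite card_imset; first exact: card_ord.
by move=> i j [] /val_inj.
Qed.

Unset Implicit Arguments.

Theorem mainTheorem6 (R : realFieldType) (n k : nat) (p : R) :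
  (1 <= n)%N -> 0 <= p -> p <= 1 -> (1 <= k)%N -> (k < n)%N ->
  Prp p (PCm (first_k n k)) =
    2 ^+ k * (p ^+ (2 ^ n - 2 ^ (n - k))%N - p ^+ (2 ^ n)%N) /\
  Prp p (NCm (first_k n k)) =
    2 ^+ k * ((1 - p) ^+ (2 ^ n - 2 ^ (n - k))%N - (1 - p) ^+ (2 ^ n)%N).
Proof.
move=> _ _ _ k_gt0 /ltnW k_le_n.
have first_k_neq0 : first_k n k != set0 by rewrite -card_gt0 card_first_k.
have Prp_canal b := Prp_canalizing_set p b first_k_neq0.
by rewrite /PCm /NCm !Prp_canal card_first_k.
Qed.
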